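(* The bi-immune symmetric group $G_{\mathfrak{B}}$ is highly transitive: for every $k \geq 1$ and any two $k$-tuples $(a_1, \dots, a_k)$, $(b_1, \dots, b_k)$ of natural numbers, each with pairwise distinct entries, there exists $\sigma \in G_{\mathfrak{B}}$ with $\sigma(a_i) = b_i$ for $1 \le i \le k$.
   Context: $\mathbb{N}$ denotes the non-negative integers, and $\mathrm{Sym}(\mathbb{N})$ the group of all permutations of $\mathbb{N}$ under composition ($g \circ f$ means apply $f$ first). For $i \in \mathbb{N}$, $\sigma_{(i)}$ is the permutation swapping $i$ and $i+1$ and fixing all other numbers. For $A \subseteq \mathbb{N}$ with increasing enumeration $a_0 < a_1 < \cdots$, define $\sigma_A(x) = \lim_{n \to \infty} (\sigma_{(a_0)} \circ \sigma_{(a_1)} \circ \cdots \circ \sigma_{(a_n)})(x)$ (eventually constant for each $x$). A set $A$ is immune if it is infinite and contains no infinite computably enumerable subset; $A$ is bi-immune if both $A$ and $\mathbb{N} - A$ are immune. For bi-immune $A$, $\sigma_A$ is a permutation of $\mathbb{N}$. The bi-immune symmetric group $G_{\mathfrak{B}}$ is the subgroup of $\mathrm{Sym}(\mathbb{N})$ generated by $\{\sigma_A : A \text{ bi-immune}\}$. *)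

From Stdlib Require Import Arith List Lia.
Import ListNotations.

Inductive code : Type :=
| CZero : code
| CSucc : code
| CProj : nat -> code
| CComp : code -> list code -> code
| CPrim : code -> code -> code
| CMu   : code -> code.

Inductive eval : code -> list nat -> nat -> Prop :=
| ev_zero v : eval CZero v 0
| ev_succ x v : eval CSucc (x :: v) (S x)
| ev_proj i v : i < length v -> eval (CProj i) v (nth i v 0)
| ev_comp f gs v ws y : evalL gs v ws -> eval f ws y -> eval (CComp f gs) v y
| ev_prim0 f g v y : eval f v y -> eval (CPrim f g) (0 :: v) y
| ev_primS f g n v z y :
    eval (CPrim f g) (n :: v) z -> eval g (n :: z :: v) y ->
    eval (CPrim f g) (S n :: v) y
| ev_mu f v n :
    eval f (n :: v) 0 ->
    (forall m, m < n -> exists k, eval f (m :: v) (S k)) ->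
    eval (CMu f) v n
with evalL : list code -> list nat -> list nat -> Prop :=
| evL_nil v : evalL [] v []
| evL_cons g gs v w ws : eval g v w -> evalL gs v ws -> evalL (g :: gs) v (w :: ws).

Definition ce (W : nat -> Prop) : Prop :=
  exists c : code, forall x, W x <-> exists y, eval c [x] y.

Definition infinite_set (A : nat -> Prop) : Prop :=
  forall n, exists m, n <= m /\ A m.

Definition immune (A : nat -> Prop) : Prop :=
  infinite_set A /\
  ~ (exists W, ce W /\ infinite_set W /\ forall x, W x -> A x).

Definition bi_immune (A : nat -> bool) : Prop :=
  immune (fun x => A x = true) /\ immune (fun x => A x = false).

Definition swap (i x : nat) : nat :=
  if Nat.eqb x i then S i else if Nat.eqb x (S i) then i else x.

(** [partial_comp A N] = sigma_(a_0) o sigma_(a_1) o ... o sigma_(a_j),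
    where a_0 < ... < a_j are the elements of A below N. *)
Fixpoint partial_comp (A : nat -> bool) (N : nat) (x : nat) : nat :=
  match N with
  | 0 => x
  | S N' => partial_comp A N' (if A N' then swap N' x else x)
  end.

(** [sigma_lim A x y]: sigma_A(x) = y, i.e. the partial compositions are
    eventually constant with value y at x. *)
Definition sigma_lim (A : nat -> bool) (x y : nat) : Prop :=
  exists N0, forall N, N0 <= N -> partial_comp A N x = y.

(** Membership in the bi-immune symmetric group G_B: finite products of
    generators sigma_A and their inverses, A bi-immune. *)
Inductive inGB : (nat -> nat) -> Prop :=
| GB_id : inGB (fun x => x)
| GB_gen (A : nat -> bool) (s g : nat -> nat) :
    bi_immune A -> (forall x, sigma_lim A x (s x)) -> inGB g ->
    inGB (fun x => s (g x))
| GB_inv (A : nat -> bool) (t g : nat -> nat) :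
    bi_immune A -> (forall x, sigma_lim A (t x) x) -> inGB g ->
    inGB (fun x => t (g x)).

(** The generators sigma_A are flexible enough to act as any adjacent
    transposition sigma_(i) on an initial segment {0, ..., M-1}: this happens
    as soon as A agrees with the indicator of {i} below M (and i + 1 < M).
    Such a bi-immune A exists because bi-immunity only depends on the tail of
    A: a diagonal construction against an enumeration (W n) of all c.e. sets
    extends any finite prefix to a set that puts one point of every infinite
    W n inside A and another one outside A.

    The theorem follows by taking M above every entry of both tuples. *)

From Stdlib Require Import Arith List Lia Cantor Classical ClassicalEpsilon.
Import ListNotations.

(** * Enumerating the c.e. sets *)

Definition pair (a b : nat) : nat := Cantor.to_nat (a, b).

Lemma pair_inj a b c d : pair a b = pair c d -> a = c /\ b = d.
Proof.
  intro H. apply (f_equal Cantor.of_nat) in H. unfold pair in H.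
  rewrite !Cantor.cancel_of_to in H. now injection H.
Qed.

Fixpoint enc_list (l : list nat) : nat :=
  match l with [] => 0 | x :: l => S (pair x (enc_list l)) end.

Lemma enc_list_inj l1 l2 : enc_list l1 = enc_list l2 -> l1 = l2.
Proof.
  revert l2; induction l1 as [|x l1 IH]; intros [|y l2]; simpl;
    try discriminate; auto.
  intro H; injection H as H; apply pair_inj in H as [-> H]; f_equal; auto.
Qed.

Fixpoint enc (c : code) : nat :=
  match c with
  | CZero => pair 0 0
  | CSucc => pair 1 0
  | CProj i => pair 2 i
  | CComp f gs => pair 3 (pair (enc f) (enc_list (map enc gs)))
  | CPrim f g => pair 4 (pair (enc f) (enc g))
  | CMu f => pair 5 (enc f)
  end.

Definition code_nested_ind (P : code -> Prop) (H0 : P CZero) (H1 : P CSucc)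
  (H2 : forall i, P (CProj i))
  (H3 : forall f gs, P f -> Forall P gs -> P (CComp f gs))
  (H4 : forall f g, P f -> P g -> P (CPrim f g))
  (H5 : forall f, P f -> P (CMu f)) : forall c, P c :=
  fix F c := match c with
  | CZero => H0 | CSucc => H1 | CProj i => H2 i
  | CComp f gs => H3 f gs (F f)
      ((fix G l := match l return Forall P l with
        | [] => Forall_nil P | g :: l' => Forall_cons g (F g) (G l') end) gs)
  | CPrim f g => H4 f g (F f) (F g)
  | CMu f => H5 f (F f)
  end.

Lemma map_inj_Forall {A B : Type} (f : A -> B) (l1 l2 : list A) :
  Forall (fun x => forall y, f x = f y -> x = y) l1 ->
  map f l1 = map f l2 -> l1 = l2.
Proof.
  revert l2; induction l1 as [|x l1 IH]; intros [|y l2] HF; simpl;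
    try discriminate; auto.
  inversion HF; subst. intro H; injection H as H H'. f_equal; auto.
Qed.

Lemma enc_inj c d : enc c = enc d -> c = d.
Proof.
  revert d.
  induction c as [ | | i | f gs IHf IHgs | f g IHf IHg | f IHf ]
    using code_nested_ind;
  intros [ | | j | f' gs' | f' g' | f' ] H; simpl in H;
  apply pair_inj in H as [Htag H]; try discriminate; try (subst; reflexivity).
  - apply pair_inj in H as [Hf Hgs]. apply IHf in Hf as ->.
    apply enc_list_inj, (map_inj_Forall enc) in Hgs as ->; auto.
  - apply pair_inj in H as [Hf Hg]. now apply IHf in Hf as ->; apply IHg in Hg as ->.
  - now apply IHf in H as ->.
Qed.

Definition decode (n : nat) : code := epsilon (inhabits CZero) (fun c => enc c = n).

Lemma decode_enc c : decode (enc c) = c.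
Proof.
  apply enc_inj. unfold decode.
  apply (epsilon_spec (inhabits CZero) (fun d => enc d = enc c)). eauto.
Qed.

Definition W (n x : nat) : Prop := exists y, eval (decode n) [x] y.

Lemma ce_enumerated V : ce V -> exists n, forall x, V x <-> W n x.
Proof.
  intros [c Hc]. exists (enc c). intro x. unfold W. rewrite decode_enc. apply Hc.
Qed.

(** * Bi-immune sets with a prescribed prefix *)

(** Diagonalisation against an arbitrary countable family [Fam] of sets:
    stage [n] picks two points of [Fam n] (when it is infinite) above all
    points chosen so far and above [M]; the first goes into the set, the
    second stays out, and below [M] the set follows [p]. *)
Section Diagonal.
Variable Fam : nat -> nat -> Prop.
Variable M : nat.
Variable p : nat -> bool.

Definition two_points_spec (n m : nat) (q : nat * nat) : Prop :=
  m <= fst q < snd q /\ (infinite_set (Fam n) -> Fam n (fst q) /\ Fam n (snd q)).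

Lemma two_points_exist n m : exists q, two_points_spec n m q.
Proof.
  destruct (classic (infinite_set (Fam n))) as [Hinf|Hfin].
  - destruct (Hinf m) as [x [Hmx Hx]]. destruct (Hinf (S x)) as [y [Hxy Hy]].
    exists (x, y). split; simpl; auto.
  - exists (m, S m). split; simpl; [lia | tauto].
Qed.

Definition two_points (n m : nat) : nat * nat :=
  epsilon (inhabits (0, 0)) (two_points_spec n m).

Lemma two_points_correct n m : two_points_spec n m (two_points n m).
Proof. unfold two_points. apply epsilon_spec, two_points_exist. Qed.

Fixpoint marker (n : nat) : nat :=
  match n with 0 => M | S n => S (snd (two_points n (marker n))) end.

Definition wit_in (n : nat) : nat := fst (two_points n (marker n)).
Definition wit_out (n : nat) : nat := snd (two_points n (marker n)).

Lemma witnesses_between n : marker n <= wit_in n < wit_out n /\ wit_out n < marker (S n).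
Proof.
  unfold wit_in, wit_out; simpl.
  destruct (two_points_correct n (marker n)) as [? _]; lia.
Qed.

Lemma marker_mono i j : i <= j -> marker i <= marker j.
Proof. induction 1; auto. pose proof (witnesses_between m); lia. Qed.

Lemma marker_lower n : n + M <= marker n.
Proof. induction n; simpl; auto. pose proof (witnesses_between n); simpl in *; lia. Qed.

Lemma wit_out_neq_in n j : wit_out n <> wit_in j.
Proof.
  pose proof (witnesses_between j); pose proof (witnesses_between n).
  destruct (lt_eq_lt_dec j n) as [[Hl| ->]|Hg]; [| lia |].
  - pose proof (marker_mono (S j) n Hl); lia.
  - pose proof (marker_mono (S n) j Hg); lia.
Qed.

Definition split_set (z : nat) : bool :=
  if z <? M then p z
  else if excluded_middle_informative (exists n, wit_in n = z) then true else false.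

Lemma split_set_prefix z : z < M -> split_set z = p z.
Proof. intro Hz. unfold split_set. now rewrite (proj2 (Nat.ltb_lt z M) Hz). Qed.

Lemma split_set_in n : split_set (wit_in n) = true.
Proof.
  unfold split_set. pose proof (witnesses_between n); pose proof (marker_lower n).
  rewrite (proj2 (Nat.ltb_ge (wit_in n) M)) by lia.
  destruct excluded_middle_informative as [_|Hnot]; auto. exfalso; eauto.
Qed.

Lemma split_set_out n : split_set (wit_out n) = false.
Proof.
  unfold split_set. pose proof (witnesses_between n); pose proof (marker_lower n).
  rewrite (proj2 (Nat.ltb_ge (wit_out n) M)) by lia.
  destruct excluded_middle_informative as [[j Hj]|_]; auto.
  exfalso; exact (wit_out_neq_in n j (eq_sym Hj)).
Qed.

Lemma split_set_witness n (b : bool) :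
  exists z, marker n <= z /\ split_set z = b /\ (infinite_set (Fam n) -> Fam n z).
Proof.
  pose proof (witnesses_between n) as Hw.
  destruct (two_points_correct n (marker n)) as [_ HFam].
  fold (wit_in n) (wit_out n) in HFam.
  destruct b; [exists (wit_in n) | exists (wit_out n)];
    rewrite ?split_set_in, ?split_set_out; repeat split; try lia; apply HFam.
Qed.
End Diagonal.

Lemma splitting_set_exists (Fam : nat -> nat -> Prop) (M : nat) (p : nat -> bool) :
  exists A : nat -> bool,
    (forall z, z < M -> A z = p z) /\
    (forall b : bool, infinite_set (fun z => A z = b)) /\
    (forall n (b : bool), infinite_set (Fam n) -> exists z, Fam n z /\ A z = b).
Proof.
  exists (split_set Fam M p). repeat split.
  - apply split_set_prefix.
  - intros b m. destruct (split_set_witness Fam M p m b) as [z [Hz [Hb _]]].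
    pose proof (marker_lower Fam M p m). exists z; split; [lia | auto].
  - intros n b Hinf. destruct (split_set_witness Fam M p n b) as [z [_ [Hb HF]]].
    exists z; auto.
Qed.

Lemma immune_level (A : nat -> bool) (b : bool) :
  infinite_set (fun z => A z = b) ->
  (forall n, infinite_set (W n) -> exists z, W n z /\ A z = negb b) ->
  immune (fun z => A z = b).
Proof.
  intros Hinf Hsplit. split; [exact Hinf|].
  intros [V [HV [HVinf Hsub]]].
  destruct (ce_enumerated V HV) as [n Hn].
  destruct (Hsplit n) as [z [Hz Hneg]].
  - intro m. destruct (HVinf m) as [z [Hm Hz]]. exists z. split; [auto | apply Hn, Hz].
  - apply Hn, Hsub in Hz. rewrite Hz in Hneg. now destruct b.
Qed.

Lemma bi_immune_with_prefix (M : nat) (p : nat -> bool) :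
  exists A, bi_immune A /\ forall z, z < M -> A z = p z.
Proof.
  destruct (splitting_set_exists W M p) as [A [Hpre [Hinf Hsplit]]].
  exists A. repeat split; auto; apply (immune_level A); auto.
Qed.

(** * The generators sigma_A on an initial segment *)

(** Transpositions at positions [N >= x + 1] do not move [x] any more, so the
    partial compositions at [x] stabilise from [N = x + 1] on. *)
Lemma partial_comp_stable A x N : x < N -> partial_comp A N x = partial_comp A (S x) x.
Proof.
  induction 1; auto. simpl. destruct (A m); auto.
  unfold swap. destruct (Nat.eqb_spec x m); [lia|].
  destruct (Nat.eqb_spec x (S m)); [lia | auto].
Qed.

(** Hence [x |-> partial_comp A (x + 1) x] is sigma_A, a generator of G_B. *)
Lemma generator_in_GB A g :
  bi_immune A -> inGB g -> inGB (fun x => partial_comp A (S (g x)) (g x)).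
Proof.
  intros HA Hg.
  apply (GB_gen A (fun x => partial_comp A (S x) x) g HA); auto.
  intro x. exists (S x). intros N HN. apply partial_comp_stable; lia.
Qed.

Lemma partial_comp_single A i N x :
  (forall z, z < N -> A z = Nat.eqb z i) ->
  partial_comp A N x = if i <? N then swap i x else x.
Proof.
  revert x; induction N as [|N IH]; intros x HA; simpl; auto.
  rewrite HA, IH by (auto; intros; apply HA; lia).
  destruct (Nat.eqb_spec N i) as [-> | Hne].
  - now rewrite Nat.ltb_irrefl, (proj2 (Nat.ltb_lt i (S i))) by lia.
  - destruct (Nat.ltb_spec i N), (Nat.ltb_spec i (S N)); auto; lia.
Qed.

Lemma adjacent_swap_in_GB M i :
  S i < M ->
  exists s, (forall g, inGB g -> inGB (fun x => s (g x))) /\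
            (forall x, x < M -> s x = swap i x).
Proof.
  intro Hi. destruct (bi_immune_with_prefix M (fun z => Nat.eqb z i)) as [A [HA Hpre]].
  exists (fun x => partial_comp A (S x) x). split.
  - intros g Hg. exact (generator_in_GB A g HA Hg).
  - intros x Hx. rewrite (partial_comp_single A i) by (intros; apply Hpre; lia).
    destruct (Nat.ltb_spec i (S x)); auto.
    unfold swap. destruct (Nat.eqb_spec x i); [lia|].
    destruct (Nat.eqb_spec x (S i)); [lia | auto].
Qed.

(** * Finite combinatorics on {0, ..., M-1} *)

Definition transp (u v x : nat) : nat :=
  if Nat.eqb x u then v else if Nat.eqb x v then u else x.

Ltac eqb_cases :=
  repeat (match goal with
          | |- context [Nat.eqb ?a ?b] => destruct (Nat.eqb_spec a b)
          | H : context [Nat.eqb ?a ?b] |- _ => destruct (Nat.eqb_spec a b)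
          end; cbv iota in * ); lia.

Lemma transp_involutive u v x : transp u v (transp u v x) = x.
Proof. unfold transp. eqb_cases. Qed.

Lemma transp_sym u v x : transp u v x = transp v u x.
Proof. unfold transp. eqb_cases. Qed.

Lemma transp_refl u x : transp u u x = x.
Proof. unfold transp. eqb_cases. Qed.

Lemma transp_conj u v x :
  S u < v -> transp u v x = swap u (transp (S u) v (swap u x)).
Proof.
  intro Huv. unfold transp, swap. eqb_cases.
Qed.

Section Segment.
Variable M : nat.

Record realizable (f : nat -> nat) : Prop := {
  realized : exists g, inGB g /\ forall x, x < M -> g x = f x;
  realizable_below : forall x, x < M -> f x < M;
  realizable_inj : forall x y, x < M -> y < M -> f x = f y -> x = y }.

Lemma realizable_id : realizable (fun x => x).
Proof. split; auto. exists (fun x => x). split; [constructor | auto]. Qed.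

Lemma realizable_ext f f' :
  realizable f -> (forall x, x < M -> f x = f' x) -> realizable f'.
Proof.
  intros [[g [Hg Hgf]] Hbelow Hinj] E. split.
  - exists g. split; auto. intros x Hx. rewrite Hgf, E; auto.
  - intros x Hx. rewrite <- E; auto.
  - intros x y Hx Hy Hxy. apply Hinj; auto. rewrite !E; auto.
Qed.

Lemma realizable_swap i f : S i < M -> realizable f -> realizable (fun x => swap i (f x)).
Proof.
  intros Hi [[g [Hg Hgf]] Hbelow Hinj].
  destruct (adjacent_swap_in_GB M i Hi) as [s [Hs Hsw]]. split.
  - exists (fun x => s (g x)). split; auto. intros x Hx. rewrite Hgf, Hsw; auto.
  - intros x Hx. specialize (Hbelow x Hx). unfold swap.
    destruct (Nat.eqb_spec (f x) i); [lia|]. destruct (Nat.eqb_spec (f x) (S i)); lia.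
  - intros x y Hx Hy Hxy. apply Hinj; auto.
    rewrite <- (transp_involutive i (S i) (f x)), <- (transp_involutive i (S i) (f y)).
    exact (f_equal (transp i (S i)) Hxy).
Qed.

Lemma realizable_transp_lt u v f :
  u < v < M -> realizable f -> realizable (fun x => transp u v (f x)).
Proof.
  remember (v - u) as d eqn:Hd. revert u Hd f.
  induction d as [|d IH]; intros u Hd f Huv Hf; [lia|].
  destruct (Nat.eq_dec v (S u)) as [-> | Hne].
  - exact (realizable_swap u f ltac:(lia) Hf).
  - apply realizable_ext with (fun x => swap u (transp (S u) v (swap u (f x)))).
    + apply realizable_swap; [lia|]. apply IH; [lia | lia |].
      apply realizable_swap; [lia | exact Hf].
    + intros x _. symmetry. apply transp_conj. lia.
Qed.

Lemma realizable_transp u v f :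
  u < M -> v < M -> realizable f -> realizable (fun x => transp u v (f x)).
Proof.
  intros Hu Hv Hf. destruct (lt_eq_lt_dec u v) as [[Hlt| ->]|Hgt].
  - apply realizable_transp_lt; auto.
  - apply realizable_ext with f; auto. intros x _. symmetry. apply transp_refl.
  - apply realizable_ext with (fun x => transp v u (f x)).
    + apply realizable_transp_lt; auto.
    + intros x _. apply transp_sym.
Qed.

(** Any tuple of distinct points of {0, ..., M-1} can be sent to any other
    tuple of the same length: send the tail first, then correct the image of
    the head by a transposition, which fixes the images of the tail. *)
Lemma realizable_tuple a b :
  length a = length b -> NoDup a -> NoDup b ->
  (forall x, In x a -> x < M) -> (forall x, In x b -> x < M) ->
  exists f, realizable f /\ forall i, i < length a -> f (nth i a 0) = nth i b 0.
Proof.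
  revert b. induction a as [|a1 a IH]; intros [|b1 b] Hlen Ha Hb HaM HbM;
    simpl in Hlen; try discriminate.
  - exists (fun x => x). split; [apply realizable_id | simpl; lia].
  - inversion Ha as [|? ? Ha1 Ha']; inversion Hb as [|? ? Hb1 Hb']; subst.
    destruct (IH b) as [f [Hf Hfab]]; auto;
      [intros x Hx; apply HaM; now right | intros x Hx; apply HbM; now right |].
    assert (Ha1M : a1 < M) by (apply HaM; now left).
    exists (fun x => transp (f a1) b1 (f x)). split.
    + apply realizable_transp; auto. now apply (realizable_below f Hf). apply HbM; now left.
    + intros [|i] Hi; simpl; [unfold transp; now rewrite Nat.eqb_refl|].
      simpl in Hi. rewrite Hfab by lia.
      assert (Hai : In (nth i a 0) a) by (apply nth_In; lia).
      assert (Hbi : In (nth i b 0) b) by (apply nth_In; lia).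
      unfold transp. destruct (Nat.eqb_spec (nth i b 0) (f a1)) as [Heq|_].
      * exfalso. rewrite <- Hfab in Heq by lia.
        apply (realizable_inj f Hf) in Heq; auto; [| apply HaM; now right].
        rewrite Heq in Hai; contradiction.
      * destruct (Nat.eqb_spec (nth i b 0) b1) as [Heq|_]; [|reflexivity].
        rewrite Heq in Hbi; contradiction.
Qed.
End Segment.

Lemma list_max_bound l x : In x l -> x < S (list_max l).
Proof.
  intro Hx. pose proof (proj1 (list_max_le l (list_max l)) (le_n _)) as HF.
  rewrite Forall_forall in HF. specialize (HF x Hx). lia.
Qed.

Theorem mainTheorem7 :
  forall (k : nat) (a b : list nat),
    1 <= k -> length a = k -> length b = k -> NoDup a -> NoDup b ->
    exists sigma : nat -> nat,
      inGB sigma /\ forall i, i < k -> sigma (nth i a 0) = nth i b 0.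
Proof.
  intros k a b _ Ha Hb Hna Hnb.
  set (M := S (list_max (a ++ b))).
  assert (HM : forall x, In x a \/ In x b -> x < M)
    by (intros x Hx; apply list_max_bound, in_or_app, Hx).
  destruct (realizable_tuple M a b) as [f [Hf Hfab]]; auto; try congruence.
  destruct (realized M f Hf) as [g [Hg Hgf]].
  exists g. split; [exact Hg|]. intros i Hi.
  rewrite Hgf by (apply HM; left; apply nth_In; lia). apply Hfab. lia.
Qed.
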